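(* In the setting described in the context, let $T:\mathcal{H}\to\mathcal{H}$ be a bounded linear operator such that $\|T_{(z,w)}\|_{H_1\to H_1}\le L(z^{-1}w)$ for all $z,w\in G$, where $L:G\to[0,\infty)$ is measurable, $L(z^{-1})=L(z)$ for all $z$, and $L\in L^1(G,\omega(z)\,dz)$ for some continuous $\omega:G\to(0,\infty)$ satisfying $\omega(zw)\le\omega(z)\omega(w)$ for all $z,w\in G$. Then $T$ is partially localized.
   Context: Setting: $H_1,H_2$ are separable Hilbert spaces, $G$ is a separable locally compact group with left Haar measure $dz$. $\{E_N\}_{N\in\mathbb{N}}$ is a sequence of open precompact subsets of $G$ with $E_N\subseteq E_{N+1}$, $E_N^{-1}=E_N$, $E_NE_N\subseteq E_{2N}$, $\bigcup_NE_N=G$. $\{\psi_z\}_{z\in G}\subseteq H_2$ is a bounded, norm-continuous continuous Parseval frame: $\langle f,g\rangle_{H_2}=\int_G\langle f,\psi_z\rangle\langle\psi_z,g\rangle\,dz$. $\mathcal{H}=H_1\widehat\otimes H_2$. For $f\in\mathcal{H}$, $g\in H_2$, $\langle f,g\rangle_{H_2}\in H_1$ is the continuous extension of $\sum c_na_n\otimes b_n\mapsto\sum c_na_n\langle b_n,g\rangle_{H_2}$. $T_{(z,w)}h:=\langle T(h\otimes\psi_z),\psi_w\rangle_{H_2}$ for $h\in H_1$. Partially localized: $T$ is bounded on $\mathcal{H}$ and there is a continuous $\omega:G\to(0,\infty)$ with $\omega(zw)\le\omega(z)\omega(w)$ such that $\sup_z\omega(z)^{-1}\int_G\|T_{(z,w)}\|\omega(w)\,dw<\infty$,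 $\sup_w\omega(w)^{-1}\int_G\|T_{(z,w)}\|\omega(z)\,dz<\infty$, $\lim_{N\to\infty}\sup_z\omega(z)^{-1}\int_{G\setminus zE_N}\|T_{(z,w)}\|\omega(w)\,dw=0$, and $\lim_{N\to\infty}\sup_w\omega(w)^{-1}\int_{G\setminus wE_N}\|T_{(z,w)}\|\omega(z)\,dz=0$. *)

From HB Require Import structures.
From mathcomp Require Import all_boot all_order all_algebra.
From mathcomp Require Import all_classical all_reals all_analysis.
From mathcomp Require Import complex.

Set Implicit Arguments.
Unset Strict Implicit.
Unset Printing Implicit Defensive.

Import Order.TTheory GRing.Theory Num.Theory.
Import numFieldNormedType.Exports.

Local Open Scope classical_set_scope.
Local Open Scope ring_scope.

(* A type carrying both a topology and a sigma-algebra (constrained to be the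
   Borel one in [lc_group] below). *)
HB.structure Definition TopMeasurable d := {T of Topological T & Measurable d T}.
Notation topMeasurableType d := (TopMeasurable.type d).

Section HilbertDefs.
Variable R : realType.
Local Notation C := (R[i]).

Section OneSpace.
Variables (V : lmodType C) (ip : V -> V -> C).

Definition inner_product :=
  [/\ (forall x y z, ip (x + y) z = ip x z + ip y z),
      (forall (a : C) x y, ip (a *: x) y = a * ip x y),
      (forall x y, ip y x = conjc (ip x y)),
      (forall x, 0 <= ip x x)
    & (forall x, ip x x = 0 -> x = 0)].

Definition hnorm (x : V) : R := Num.sqrt (complex.Re (ip x x)).

Definition hcomplete :=
  forall u : nat -> V,
    (forall e : R, 0 < e -> exists N, forall m n, (N <= m)%N -> (N <= n)%N ->
        hnorm (u m - u n) < e) ->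
    exists l, forall e : R, 0 < e -> exists N, forall n, (N <= n)%N ->
        hnorm (u n - l) < e.

Definition hseparable :=
  exists D : nat -> V, forall x (e : R), 0 < e -> exists n, hnorm (x - D n) < e.

Definition separable_hilbert := [/\ inner_product, hcomplete & hseparable].

Definition opnorm (A : V -> V) : \bar R :=
  ereal_sup [set (hnorm (A h))%:E | h in [set h | hnorm h <= 1]].
End OneSpace.

Definition bounded_linear (V W : lmodType C) (ipV : V -> V -> C) (ipW : W -> W -> C)
  (A : V -> W) :=
  (forall (a : C) x y, A (a *: x + y) = a *: A x + A y) /\
  exists K : R, forall x, hnorm ipW (A x) <= K * hnorm ipV x.

Definition hilbert_tensor (V1 V2 H : lmodType C) (ip1 : V1 -> V1 -> C)
  (ip2 : V2 -> V2 -> C) (ipH : H -> H -> C) (tens : V1 -> V2 -> H) :=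
  [/\ (forall a a' b, tens (a + a') b = tens a b + tens a' b),
      (forall (c : C) a b, tens (c *: a) b = c *: tens a b),
      (forall a b b', tens a (b + b') = tens a b + tens a b'),
      (forall (c : C) a b, tens a (c *: b) = c *: tens a b)
    & (forall a b a' b', ipH (tens a b) (tens a' b') = ip1 a a' * ip2 b b') /\
      (forall f (e : R), 0 < e -> exists n (a : 'I_n -> V1) (b : 'I_n -> V2),
          hnorm ipH (f - \sum_(i < n) tens (a i) (b i)) < e)].

(* pip f g = <f, g>_{H2} in H1 : the continuous (bounded linear) extension of
   a (x) b |-> <b, g>_{H2} a *)
Definition partial_pairing (V1 V2 H : lmodType C) (ip1 : V1 -> V1 -> C)
  (ip2 : V2 -> V2 -> C) (ipH : H -> H -> C) (tens : V1 -> V2 -> H)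
  (pip : H -> V2 -> V1) :=
  forall g, bounded_linear ipH ip1 (pip ^~ g) /\
            (forall a b, pip (tens a b) g = ip2 b g *: a).

Definition Tzw (V1 V2 H : lmodType C) (G : Type) (tens : V1 -> V2 -> H)
  (pip : H -> V2 -> V1) (psi : G -> V2) (T : H -> H) (z w : G) : V1 -> V1 :=
  fun h => pip (T (tens h (psi z))) (psi w).

Section Group.
Variables (d : measure_display) (G : topMeasurableType d).
Variables (mul : G -> G -> G) (inv : G -> G) (one : G).

Definition lc_group :=
  [/\ (forall x y z, mul x (mul y z) = mul (mul x y) z),
      (forall x, mul one x = x) /\ (forall x, mul (inv x) x = one),
      continuous (fun p : G * G => mul p.1 p.2) /\ continuous inv,
      hausdorff_space G /\ locally_compact [set: G]
    & (exists D : set G, countable D /\ dense D) /\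
      (@measurable d G = <<s open >>)].

Definition left_haar (mu : {measure set G -> \bar R}) :=
  [/\ (forall z A, measurable A -> mu (mul z @` A) = mu A),
      (forall K, compact K -> (mu K < +oo)%E),
      (forall U, open U -> U !=set0 -> (0 < mu U)%E),
      (forall A, measurable A ->
          mu A = ereal_inf [set mu U | U in [set U | open U /\ A `<=` U]])
    & (forall U, open U ->
          mu U = ereal_sup [set mu K | K in [set K | compact K /\ K `<=` U]])].

(* the exhausting sequence {E_N} (indexed from 0; the doubling property is
   required for N >= 1) *)
Definition exhaustion (E : nat -> set G) :=
  [/\ (forall N, open (E N) /\ compact (closure (E N))),
      (forall N, E N `<=` E N.+1),
      (forall N, inv @` E N = E N),
      (forall N, (0 < N)%N -> [set mul x y | x in E N & y in E N] `<=` E (2 * N)%N)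
    & \bigcup_N E N = [set: G]].

Definition parseval_frame (V2 : lmodType C) (ip2 : V2 -> V2 -> C)
  (mu : {measure set G -> \bar R}) (psi : G -> V2) :=
  [/\ (exists B : R, forall z, hnorm ip2 (psi z) <= B),
      (forall z (e : R), 0 < e -> \forall z' \near z, hnorm ip2 (psi z' - psi z) < e)
    & (forall f g,
        let F := fun z => ip2 f (psi z) * ip2 (psi z) g in
        [/\ mu.-integrable setT (fun z => (complex.Re (F z))%:E),
            mu.-integrable setT (fun z => (complex.Im (F z))%:E)
          & ip2 f g = (Rintegral mu setT (fun z => complex.Re (F z)))%:C%C
                      + 'i%C * (Rintegral mu setT (fun z => complex.Im (F z)))%:C%C])].

Definition partially_localized (V1 H : lmodType C) (ip1 : V1 -> V1 -> C)
  (ipH : H -> H -> C) (mu : {measure set G -> \bar R}) (E : nat -> set G)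
  (T : H -> H) (Tz : G -> G -> V1 -> V1) :=
  bounded_linear ipH ipH T /\
  exists omega : G -> R,
    [/\ continuous omega, (forall z, 0 < omega z)
      & (forall z w, omega (mul z w) <= omega z * omega w)] /\
    [/\ (ereal_sup [set (((omega z)^-1)%:E *
           \int[mu]_w (opnorm ip1 (Tz z w) * (omega w)%:E))%E | z in [set: G]] < +oo)%E,
        (ereal_sup [set (((omega w)^-1)%:E *
           \int[mu]_z (opnorm ip1 (Tz z w) * (omega z)%:E))%E | w in [set: G]] < +oo)%E,
        (fun N => ereal_sup [set (((omega z)^-1)%:E *
           \int[mu]_(w in ~` (mul z @` E N)) (opnorm ip1 (Tz z w) * (omega w)%:E))%E
             | z in [set: G]]) @ \oo --> 0%E
      & (fun N => ereal_sup [set (((omega w)^-1)%:E *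
           \int[mu]_(z in ~` (mul w @` E N)) (opnorm ip1 (Tz z w) * (omega z)%:E))%E
             | w in [set: G]]) @ \oo --> 0%E].

End Group.
End HilbertDefs.

(* Put k := L omega.  Since omega w <= omega z * omega (z^-1 w), for every z and
   measurable S
     omega(z)^-1 \int_{G \ zS} |T_(z,w)| omega(w) dw
       <= \int_{G \ zS} L(z^-1 w) omega(z^-1 w) dw = \int_{G \ S} k
   by left invariance of the Haar measure, uniformly in z; as L(z^-1) = L(z),
   the kernel (z, w) |-> |T_(w,z)| obeys the same bound.  S = {} yields the two
   finiteness conditions and S = E_N the two tail conditions, because
   \int_{G \ E_N} k -> 0 by dominated convergence as the E_N exhaust G. *)

From HB Require Import structures.
From mathcomp Require Import all_boot all_order all_algebra.
From mathcomp Require Import all_classical all_reals all_analysis.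
From mathcomp Require Import complex.
From mathcomp Require Import measurable_realfun.

Import Order.TTheory GRing.Theory Num.Theory.
Import numFieldNormedType.Exports.
Local Open Scope classical_set_scope.
Local Open Scope ring_scope.

Set Implicit Arguments.
Unset Strict Implicit.

Section integral_complements.
Local Open Scope ereal_scope.
Context d (T : measurableType d) (R : realType).
Variable mu : {measure set T -> \bar R}.

(* Unlike [ge0_le_integral], no measurability is required (the operator-norm
   kernels below are not known to be measurable): the integral of a nonnegative
   function is a supremum over the simple functions below it. *)
Lemma ge0_le_integral_nonmeas (D : set T) (f g : T -> \bar R) :
  (forall x, D x -> 0 <= f x) -> (forall x, D x -> f x <= g x) ->
  \int[mu]_(x in D) f x <= \int[mu]_(x in D) g x.
Proof.
move=> f0 fg; rewrite !ge0_integralE//; last first.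
  by move=> x Dx; apply: le_trans (fg x Dx); exact: f0.
apply: ereal_sup_le => _ [h hf <-]; exists h => //= x.
exact: le_trans (hf x) (lee_restrict fg x).
Qed.

Lemma integral_setC_cvg0 (E : nat -> set T) (k : T -> R) :
  (forall N, measurable (E N)) -> (forall N, E N `<=` E N.+1) ->
  \bigcup_N E N = setT -> (forall x, (0 <= k x)%R) ->
  mu.-integrable setT (fun x => (k x)%:E) ->
  (fun N => \int[mu]_(x in ~` E N) (k x)%:E) @ \oo --> 0.
Proof.
move=> mE EE UE k0 ik.
have E_nd m n : (m <= n)%N -> E m `<=` E n.
  by move=> /subnK <-; elim: (n - m)%N => // i IH x /IH; apply: EE.
have mk : measurable_fun setT (fun x => (k x)%:E) := measurable_int mu ik.
pose f N := (fun x => (k x)%:E) \_ (~` E N).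
have mf N : measurable_fun setT (f N).
  apply/(measurable_restrictT _ _).1; first exact: measurableC.
  exact: measurable_funTS.
have f_cvg0 x : setT x -> f ^~ x @ \oo --> cst 0 x.
  move=> _; have : setT x by [].
  rewrite -UE => -[N _ ENx]; apply: cvg_near_cst; near=> n.
  rewrite /f /patch ifF //; apply/negbTE/negP; rewrite inE; apply.
  by apply: E_nd ENx; near: n; exists N.
have f_le x n : setT x -> `|f n x| <= (k x)%:E.
  by move=> _; rewrite /f /patch; case: ifP; rewrite ?abse0 ?gee0_abs lee_fin.
have [_ _ ] := dominated_convergence measurableT mf (measurable_cst _)
  (aeW _ f_cvg0) ik (aeW _ f_le).
rewrite integral0; apply: cvg_trans; apply: near_eq_cvg; apply: nearW => N /=.
by rewrite [RHS]integral_mkcond.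
Unshelve. all: end_near.
Qed.

End integral_complements.

Lemma opnorm_ge0 (R : realType) (V : lmodType R[i]) (ip : V -> V -> R[i])
    (A : V -> V) :
  inner_product ip -> (0 <= opnorm ip A)%E.
Proof.
case=> ipD _ _ _ _.
have ip00 : ip 0 0 = 0.
  by apply: (@addrI _ (ip 0 0)); rewrite addr0 -ipD addr0.
apply: le_ereal_sup_tmp; exists (hnorm ip (A 0))%:E.
  by exists 0 => //; rewrite /= /hnorm ip00 /= sqrtr0.
by rewrite lee_fin /hnorm sqrtr_ge0.
Qed.

Section lc_group_facts.
Context d (G : topMeasurableType d).
Context (mul : G -> G -> G) (inv : G -> G) (one : G).
Hypothesis hG : lc_group mul inv one.

Lemma lcg_mulKg a x : mul (inv a) (mul a x) = x.
Proof. by case: hG => mulA [mul1g mulVg] _ _ _; rewrite mulA mulVg mul1g. Qed.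

Lemma lcg_mulgV x : mul x (inv x) = one.
Proof.
case: hG => mulA [mul1g mulVg] _ _ _.
by rewrite -[LHS]mul1g -(mulVg (inv x)) -mulA (lcg_mulKg x).
Qed.

Lemma lcg_mulKVg a x : mul a (mul (inv a) x) = x.
Proof. by case: hG => mulA [mul1g _] _ _ _; rewrite mulA lcg_mulgV mul1g. Qed.

Lemma lcg_mulg1 x : mul x one = x.
Proof. by case: hG => _ [_ mulVg] _ _ _; rewrite -(mulVg x) lcg_mulKVg. Qed.

Lemma lcg_inv_unique x y : mul y x = one -> y = inv x.
Proof.
case: hG => mulA [mul1g _] _ _ _ yx1.
by rewrite -[y]lcg_mulg1 -(lcg_mulgV x) mulA yx1 mul1g.
Qed.

Lemma lcg_invgK x : inv (inv x) = x.
Proof. by apply/esym/lcg_inv_unique; rewrite lcg_mulgV. Qed.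

Lemma lcg_invMg x y : inv (mul x y) = mul (inv y) (inv x).
Proof.
apply/esym/lcg_inv_unique; case: hG => mulA [_ mulVg] _ _ _.
by rewrite -mulA lcg_mulKg mulVg.
Qed.

Lemma lcg_image_mull a (A : set G) : mul a @` A = mul (inv a) @^-1` A.
Proof.
apply/seteqP; split => [_ [x Ax <-]|y Ay] /=; first by rewrite lcg_mulKg.
by exists (mul (inv a) y); rewrite ?lcg_mulKVg.
Qed.

Lemma lcg_preimage_image_mull a (A : set G) : mul a @^-1` (mul a @` A) = A.
Proof.
rewrite lcg_image_mull -comp_preimage.
by apply/seteqP; split=> x /=; rewrite lcg_mulKg.
Qed.

Lemma lcg_continuous_mull a : continuous (mul a).
Proof.
case: hG => _ _ [mul_cont _] _ _ x.
apply: (@continuous_comp _ _ _ (fun u => (a, u))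
  (fun p : G * G => mul p.1 p.2)).
  by apply: cvg_pair; [exact: cvg_cst|exact: cvg_id].
exact: mul_cont.
Qed.

Lemma lcg_open_measurable (A : set G) : open A -> measurable A.
Proof. by case: hG => _ _ _ _ [_ ->] oA; exact: sub_sigma_algebra. Qed.

Lemma lcg_continuous_measurable (f : G -> G) :
  continuous f -> measurable_fun setT f.
Proof.
move=> cf; case: hG => _ _ _ _ [_ mE].
apply: (measurability _ mE) => _ [B oB <-].
by rewrite setTI; apply: lcg_open_measurable; move/continuousP: cf; apply.
Qed.

Lemma lcg_continuous_measurableR (R : realType) (f : G -> R) :
  continuous f -> measurable_fun setT f.
Proof.
move=> cf; apply: (measurability _ (RGenOpens.measurableE R)).
move=> _ [_ [a [b ->]] <-]; rewrite setTI; apply: lcg_open_measurable.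
by move/continuousP: cf; apply; exact: interval_open.
Qed.

End lc_group_facts.

Section left_haar_integrals.
Local Open Scope ereal_scope.
Context (R : realType) d (G : topMeasurableType d).
Context (mul : G -> G -> G) (inv : G -> G) (one : G).
Hypothesis hG : lc_group mul inv one.
Variable mu : {measure set G -> \bar R}.
Hypothesis haar : left_haar mul mu.

Lemma lcg_measurable_mull a : measurable_fun setT (mul a).
Proof. exact/(lcg_continuous_measurable hG)/(lcg_continuous_mull hG). Qed.

Lemma haar_preimage_mull a (A : set G) :
  measurable A -> mu (mul a @^-1` A) = mu A.
Proof.
case: haar => mu_mull _ _ _ _ mA.
by rewrite -[in mul a](lcg_invgK hG a) -(lcg_image_mull hG) mu_mull.
Qed.

Lemma haar_ge0_integral_setC_image_mull a (S : set G) (h : G -> \bar R) :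
  measurable S -> measurable_fun setT h -> (forall x, 0 <= h x) ->
  \int[mu]_(x in ~` (mul a @` S)) h x = \int[mu]_(u in ~` S) h (mul a u).
Proof.
move=> mS mh h0; have ma := lcg_measurable_mull a.
have maS : measurable (~` (mul a @` S)).
  apply: measurableC; rewrite (lcg_image_mull hG) -[_ @^-1` _]setTI.
  exact: lcg_measurable_mull.
rewrite (eq_measure_integral (pushforward mu (mul a))); last first.
  by move=> A mA _; apply/esym/haar_preimage_mull.
rewrite ge0_integral_pushforward //; last exact: measurable_funTS.
by rewrite -preimage_setC (lcg_preimage_image_mull hG).
Qed.

End left_haar_integrals.

Section kernel_tails.
Local Open Scope ereal_scope.
Context (R : realType) d (G : topMeasurableType d).
Context (mul : G -> G -> G) (inv : G -> G) (one : G).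
Hypothesis hG : lc_group mul inv one.
Variable mu : {measure set G -> \bar R}.
Hypothesis haar : left_haar mul mu.
Variables (L omega : G -> R).
Hypothesis mL : measurable_fun setT L.
Hypothesis L_ge0 : forall z, (0 <= L z)%R.
Hypothesis omega_cont : continuous omega.
Hypothesis omega_gt0 : forall z, (0 < omega z)%R.
Hypothesis omega_submul : forall z w, (omega (mul z w) <= omega z * omega w)%R.
Hypothesis Lomega_int : mu.-integrable setT (fun z => (L z * omega z)%:E).
Variable K : G -> G -> \bar R.
Hypothesis K_ge0 : forall z w, 0 <= K z w.
Hypothesis K_le : forall z w, K z w <= (L (mul (inv z) w))%:E.

Let Lomega_ge0 z : (0 <= L z * omega z)%R.
Proof. exact: mulr_ge0 (L_ge0 z) (ltW (omega_gt0 z)). Qed.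

Let momega : measurable_fun setT omega :=
  lcg_continuous_measurableR hG omega_cont.

Let mLomega : measurable_fun setT (fun z => L z * omega z)%R.
Proof. exact: measurable_funM. Qed.

Lemma kernel_weighted_tail_le a S : measurable S ->
  (omega a)^-1%:E * \int[mu]_(w in ~` (mul a @` S)) (K a w * (omega w)%:E)
  <= \int[mu]_(u in ~` S) (L u * omega u)%:E.
Proof.
move=> mS.
have inv_omega_ge0 : 0 <= (omega a)^-1%:E by rewrite lee_fin invr_ge0 ltW.
pose h w := (L (mul (inv a) w) * omega w)%:E.
have mh : measurable_fun setT h.
  apply/measurable_EFinP/measurable_funM => //.
  exact: measurableT_comp mL (lcg_measurable_mull hG (inv a)).
have h_ge0 w : 0 <= h w by rewrite lee_fin mulr_ge0 // ltW.
apply: (@le_trans _ _ ((omega a)^-1%:E * \int[mu]_(w in ~` (mul a @` S)) h w)).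
  apply: lee_wpmul2l => //; apply: ge0_le_integral_nonmeas => w _.
    by rewrite mule_ge0 // lee_fin ltW.
  by rewrite /h EFinM lee_wpmul2r // lee_fin ltW.
rewrite (haar_ge0_integral_setC_image_mull hG haar) //.
apply: (@le_trans _ _ ((omega a)^-1%:E *
    \int[mu]_(u in ~` S) ((omega a)%:E * (L u * omega u)%:E))).
  apply: lee_wpmul2l => //; apply: ge0_le_integral_nonmeas => u _ //.
  by rewrite /h (lcg_mulKg hG) -EFinM lee_fin mulrCA ler_wpM2l.
rewrite ge0_integralZl_EFin; last 4 first.
- exact: measurableC.
- by move=> u _; rewrite lee_fin.
- exact/measurable_EFinP/measurable_funTS.
- exact: ltW.
by rewrite muleA -EFinM mulVf ?gt_eqF // mul1e.
Qed.

Lemma kernel_sup_weighted_tail_le S : measurable S ->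
  ereal_sup [set (omega z)^-1%:E *
      \int[mu]_(w in ~` (mul z @` S)) (K z w * (omega w)%:E) | z in [set: G]]
  <= \int[mu]_(u in ~` S) (L u * omega u)%:E.
Proof.
by move=> mS; apply: ge_ereal_sup => _ [z _ <-]; exact: kernel_weighted_tail_le.
Qed.

Lemma kernel_sup_weighted_lt_pinfty :
  ereal_sup [set (omega z)^-1%:E * \int[mu]_w (K z w * (omega w)%:E)
    | z in [set: G]] < +oo.
Proof.
apply: (@le_lt_trans _ _ (\int[mu]_u (L u * omega u)%:E)).
  apply: ge_ereal_sup => _ [z _ <-].
  by have := kernel_weighted_tail_le z measurable0; rewrite image_set0 setC0.
move/integrableP: Lomega_int => [_]; apply: le_lt_trans.
by apply: ge0_le_integral_nonmeas => z _; rewrite lee_fin // ler_norm.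
Qed.

Variable E : nat -> set G.
Hypothesis hE : exhaustion mul inv E.

Lemma kernel_sup_weighted_tail_cvg0 :
  (fun N => ereal_sup [set (omega z)^-1%:E *
      \int[mu]_(w in ~` (mul z @` E N)) (K z w * (omega w)%:E) | z in [set: G]])
  @ \oo --> 0.
Proof.
have [E_open E_nd _ _ E_cover] := hE.
have mE N : measurable (E N) := lcg_open_measurable hG (E_open N).1.
have := integral_setC_cvg0 mE E_nd E_cover Lomega_ge0 Lomega_int.
apply: (squeeze_cvge (f := cst 0)) (cvg_cst _).
apply: nearW => N /=; apply/andP; split.
  apply: le_ereal_sup_tmp; eexists; first by exists one.
  apply: mule_ge0; first by rewrite lee_fin invr_ge0 ltW.
  by apply: integral_ge0 => w _; rewrite mule_ge0 // lee_fin ltW.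
exact: kernel_sup_weighted_tail_le.
Qed.

End kernel_tails.

Theorem lemma4p2 (R : realType) (V1 V2 H : lmodType R[i])
  (ip1 : V1 -> V1 -> R[i]) (ip2 : V2 -> V2 -> R[i]) (ipH : H -> H -> R[i])
  (tens : V1 -> V2 -> H) (pip : H -> V2 -> V1)
  (d : measure_display) (G : topMeasurableType d)
  (mul : G -> G -> G) (inv : G -> G) (one : G)
  (mu : {measure set G -> \bar R}) (E : nat -> set G) (psi : G -> V2)
  (T : H -> H) (L : G -> R) (omega : G -> R) :
  separable_hilbert ip1 -> separable_hilbert ip2 -> separable_hilbert ipH ->
  hilbert_tensor ip1 ip2 ipH tens -> partial_pairing ip1 ip2 ipH tens pip ->
  lc_group mul inv one -> left_haar mul mu -> exhaustion mul inv E ->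
  parseval_frame ip2 mu psi ->
  bounded_linear ipH ipH T ->
  measurable_fun [set: G] L -> (forall z, 0 <= L z) -> (forall z, L (inv z) = L z) ->
  continuous omega -> (forall z, 0 < omega z) ->
  (forall z w, omega (mul z w) <= omega z * omega w) ->
  mu.-integrable [set: G] (fun z => (L z * omega z)%:E) ->
  (forall z w, (opnorm ip1 (Tzw tens pip psi T z w) <= (L (mul (inv z) w))%:E)%E) ->
  partially_localized mul ip1 ipH mu E T (Tzw tens pip psi T).
Proof.
move=> [ip1_inner _ _] _ _ _ _ hG haar hE _ bT mL L_ge0 L_sym omega_cont
  omega_gt0 omega_submul Lomega_int T_le.
pose K z w := opnorm ip1 (Tzw tens pip psi T z w).
have K_ge0 (z w : G) : (0 <= K z w)%E by exact: opnorm_ge0.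
have K_sym_le (z w : G) : (K w z <= (L (mul (inv z) w))%:E)%E.
  by rewrite -L_sym (lcg_invMg hG) (lcg_invgK hG); exact: T_le.
have sup_fin := kernel_sup_weighted_lt_pinfty hG haar mL L_ge0 omega_cont
  omega_gt0 omega_submul Lomega_int.
have sup_cvg0 := kernel_sup_weighted_tail_cvg0 hG haar mL L_ge0 omega_cont
  omega_gt0 omega_submul Lomega_int.
split=> //; exists omega; split=> //; split.
- exact: sup_fin K_ge0 T_le.
- exact: sup_fin (fun z w => K_ge0 w z) K_sym_le.
- exact: sup_cvg0 K_ge0 T_le _ hE.
- exact: sup_cvg0 (fun z w => K_ge0 w z) K_sym_le _ hE.
Qed.
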